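(* In the setting of $N$ classical particles of equal mass $m$ and charge $q$ with Hamiltonian $H(\mathbf X,\mathbf P)=\frac1{2m}\sum_{i=1}^N|\mathbf p_i-q\boldsymbol A(\mathbf x_i)|^2$ for a smooth vector potential $\boldsymbol A:\mathbb R^3\to\mathbb R^3$, let $\mathcal M_m\in O(3)$ with $\mathcal M_m^2=I$ and let $\mathcal M$ act as $(\mathbf x_i,\mathbf p_i)\mapsto(\mathcal M_m\mathbf x_i,-\mathcal M_m\mathbf p_i)$ for every $i$ (block diagonal on $\mathbb R^{3N}$ with identical $3\times3$ blocks $\mathcal M_m$). Then $\mathcal M$ yields time reversal invariance if and only if there is a smooth $G:\mathbb R^3\to\mathbb R$ with $$\mathcal M_m\boldsymbol A(\mathcal M_m\mathbf x)=-\boldsymbol A(\mathbf x)-\nabla G(\mathbf x)\quad\text{for all }\mathbf x\in\mathbb R^3,$$ i.e. $\mathcal M_m\boldsymbol A(\mathcal M_m\,\cdot)\in[-\boldsymbol A]$.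
   Context: $\mathcal M$ yields time reversal invariance if there is a smooth $G:\mathbb R^3\to\mathbb R$ with $H(\mathcal M\Gamma)=\frac1{2m}\sum_i|\mathbf p_i-q(\boldsymbol A(\mathbf x_i)+\nabla G(\mathbf x_i))|^2$ for all $\Gamma=(\mathbf x_i,\mathbf p_i)_i$. $[\boldsymbol A]$ denotes the gauge class $\{\boldsymbol A+\nabla G\}$. *)

From HB Require Import structures.
From mathcomp Require Import all_boot all_order all_algebra.
From mathcomp Require Import all_classical all_reals all_analysis.
Set Implicit Arguments. Unset Strict Implicit. Unset Printing Implicit Defensive.
Import Order.TTheory GRing.Theory Num.Theory.
Import numFieldNormedType.Exports.
Local Open Scope ring_scope.

Section Defs.
Variable R : realType.

Fixpoint iter_dir {W : normedModType R} (vs : seq 'cV[R]_3) (f : 'cV[R]_3 -> W)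
  : 'cV[R]_3 -> W :=
  match vs with
  | [::] => f
  | v :: vs' => fun x => derive (iter_dir vs' f) x v
  end.

Definition smooth {W : normedModType R} (f : 'cV[R]_3 -> W) : Prop :=
  forall vs : seq 'cV[R]_3,
    continuous (iter_dir vs f) /\
    forall (v x : 'cV[R]_3), derivable (iter_dir vs f) x v.

Definition evec (i : 'I_3) : 'cV[R]_3 := delta_mx i ord0.

Definition grad (G : 'cV[R]_3 -> R^o) (x : 'cV[R]_3) : 'cV[R]_3 :=
  \col_i derive G x (evec i).

Definition sqnorm (v : 'cV[R]_3) : R := \sum_(i < 3) (v i ord0) ^+ 2.

Definition hamiltonian (N : nat) (m q : R) (A : 'cV[R]_3 -> 'cV[R]_3)
  (X P : 'I_N -> 'cV[R]_3) : R :=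
  (2 * m)^-1 * \sum_(i < N) sqnorm (P i - q *: A (X i)).

Definition Mact_x (N : nat) (Mm : 'M[R]_3) (X : 'I_N -> 'cV[R]_3) :=
  fun i => Mm *m X i.
Definition Mact_p (N : nat) (Mm : 'M[R]_3) (P : 'I_N -> 'cV[R]_3) :=
  fun i => - (Mm *m P i).

Definition yields_TRI (N : nat) (m q : R) (A : 'cV[R]_3 -> 'cV[R]_3)
  (Mm : 'M[R]_3) : Prop :=
  exists G : 'cV[R]_3 -> R^o, smooth G /\
    forall X P : 'I_N -> 'cV[R]_3,
      hamiltonian m q A (Mact_x Mm X) (Mact_p Mm P) =
      (2 * m)^-1 * \sum_(i < N) sqnorm (P i - q *: (A (X i) + grad G (X i))).

End Defs.

From HB Require Import structures.
From mathcomp Require Import all_boot all_order all_algebra.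
From mathcomp Require Import all_classical all_reals all_analysis.
Set Implicit Arguments.
Unset Strict Implicit.
Unset Printing Implicit Defensive.
Import Order.TTheory GRing.Theory Num.Theory.
Import numFieldNormedType.Exports.
Local Open Scope ring_scope.

(** Since [Mm] is an orthogonal involution, the kinetic term of particle [i]
    at [M Gamma] equals [|p_i - q A'(x_i)|^2] with the transformed potential
    [A' x = - Mm A (Mm x)]; so [M] yields time reversal invariance iff the
    Hamiltonians for [A'] and [A + grad G] coincide.  Evaluating both at the
    configuration where all particles sit at [x] with momentum [q (A + grad G) x]
    makes the second vanish, so the first forces [A' x = A x + grad G x]. *)

Section Sqnorm.
Variable R : realType.
Implicit Types (v : 'cV[R]_3) (Mm : 'M[R]_3).

Lemma sqnormE v : sqnorm v = (v^T *m v) ord0 ord0.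
Proof. by rewrite /sqnorm mxE; apply: eq_bigr => i _; rewrite mxE expr2. Qed.

Lemma sqnorm_orthogonal Mm v : Mm^T *m Mm = 1%:M -> sqnorm (Mm *m v) = sqnorm v.
Proof. by move=> orthM; rewrite !sqnormE trmx_mul -mulmxA (mulmxA Mm^T) orthM mul1mx. Qed.

Lemma sqnormN v : sqnorm (- v) = sqnorm v.
Proof. by apply: eq_bigr => i _; rewrite mxE sqrrN. Qed.

Lemma sqnorm0 : sqnorm (0 : 'cV[R]_3) = 0.
Proof. by rewrite /sqnorm big1 // => i _; rewrite mxE expr0n. Qed.

Lemma sqnorm_eq0 v : (sqnorm v == 0) = (v == 0).
Proof.
apply/idP/eqP => [|->]; last by rewrite sqnorm0.
rewrite psumr_eq0 => [/allP v0|i _]; last exact: sqr_ge0.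
apply/matrixP => i j; rewrite (ord1 j) mxE.
by apply/eqP; rewrite -sqrf_eq0; apply: v0; rewrite mem_index_enum.
Qed.

End Sqnorm.

Section Hamiltonian.
Variables (R : realType) (N : nat) (m q : R).

Definition reversed_potential (Mm : 'M[R]_3) (A : 'cV[R]_3 -> 'cV[R]_3) :
    'cV[R]_3 -> 'cV[R]_3 :=
  fun x => - (Mm *m A (Mm *m x)).

Lemma hamiltonian_Mact (Mm : 'M[R]_3) (A : 'cV[R]_3 -> 'cV[R]_3)
    (X P : 'I_N -> 'cV[R]_3) :
  Mm^T *m Mm = 1%:M -> Mm *m Mm = 1%:M ->
  hamiltonian m q A (Mact_x Mm X) (Mact_p Mm P) =
  hamiltonian m q (reversed_potential Mm A) X P.
Proof.
move=> orthM invM; congr (_ * _); apply: eq_bigr => i _.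
rewrite /Mact_x /Mact_p /reversed_potential.
have -> : - (Mm *m P i) - q *: A (Mm *m X i) =
          - (Mm *m (P i - q *: - (Mm *m A (Mm *m X i)))).
  by rewrite mulmxBr -scalemxAr mulmxN mulmxA invM mul1mx scalerN opprK opprD.
by rewrite sqnormN sqnorm_orthogonal.
Qed.

Lemma hamiltonian_eq_potential (A B : 'cV[R]_3 -> 'cV[R]_3) :
  (0 < N)%N -> m != 0 -> q != 0 ->
  (forall X P : 'I_N -> 'cV[R]_3, hamiltonian m q A X P = hamiltonian m q B X P)
  <-> forall x, A x = B x.
Proof.
move=> N0 m0 q0; split => [eqH x|eqAB X P]; last first.
  by rewrite /hamiltonian; under eq_bigr do rewrite eqAB.
have := eqH (fun _ => x) (fun _ => q *: B x).
rewrite /hamiltonian [in X in _ = X]big1 => [|i _]; last by rewrite subrr sqnorm0.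
rewrite sumr_const card_ord mulr0 => /eqP; rewrite mulf_eq0 invr_eq0 mulf_eq0.
rewrite pnatr_eq0 (negbTE m0) mulrn_eq0 (gtn_eqF N0) /= sqnorm_eq0.
by rewrite -scalerBr scaler_eq0 (negbTE q0) subr_eq0 => /eqP.
Qed.

Lemma hamiltonian_Mact_eq (Mm : 'M[R]_3) (A B : 'cV[R]_3 -> 'cV[R]_3) :
  (0 < N)%N -> m != 0 -> q != 0 ->
  Mm^T *m Mm = 1%:M -> Mm *m Mm = 1%:M ->
  (forall X P : 'I_N -> 'cV[R]_3,
     hamiltonian m q A (Mact_x Mm X) (Mact_p Mm P) = hamiltonian m q B X P)
  <-> forall x, reversed_potential Mm A x = B x.
Proof.
move=> N0 m0 q0 orthM invM.
rewrite -(hamiltonian_eq_potential _ _ N0 m0 q0).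
by split=> eqH X P; rewrite -?eqH (hamiltonian_Mact A X P orthM invM).
Qed.

End Hamiltonian.

Theorem mainTheorem11 (R : realType) (N : nat) (m q : R)
  (A : 'cV[R]_3 -> 'cV[R]_3) (Mm : 'M[R]_3) :
  (0 < N)%N -> 0 < m -> q != 0 ->
  smooth A ->
  Mm^T *m Mm = 1%:M -> Mm *m Mm = 1%:M ->
  (yields_TRI N m q A Mm <->
   exists G : 'cV[R]_3 -> R^o, smooth G /\
     forall x : 'cV[R]_3, Mm *m A (Mm *m x) = - A x - grad G x).
Proof.
move=> N0 m0 q0 _ orthM invM.
have reversedE G x : reversed_potential Mm A x = A x + grad G x <->
                     Mm *m A (Mm *m x) = - A x - grad G x.
  rewrite /reversed_potential; split=> [eqA|->]; last by rewrite opprD 2!opprK.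
  by rewrite -[LHS]opprK eqA opprD.
have TRI_iff G := hamiltonian_Mact_eq A (fun x => A x + grad G x)
  N0 (lt0r_neq0 m0) q0 orthM invM.
split=> -[G [smoothG eqG]]; exists G; split=> //.
  by move=> x; apply/reversedE; apply: (iffLR (TRI_iff G)).
by apply/(iffRL (TRI_iff G)) => x; apply/reversedE.
Qed.
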